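(* For every $j$ with $2\le j\le n-1$ the following identities of operators on $V^{\otimes n}$ hold: $$S_jS_{j-1}T_j=T_{j-1}S_jS_{j-1},$$ $$S_jS_{j-1}S_jS_{j-1}^{-1}T_{j-1}=T_jS_jS_{j-1}S_jS_{j-1}^{-1},$$ $$S_jS_{j-1}S_jS_{j-1}T_{j-1}=T_jS_jS_{j-1}S_jS_{j-1},$$ where $S_{j-1}^{-1}$ denotes the inverse of the (invertible) operator $S_{j-1}$.
   Context: Let $n\ge 3$, $m\ge1$ and $\mathbb K=\mathbb C(q,Q_1,\dots,Q_m)$, the field of rational functions in indeterminates. Fix nonnegative integers $k_1,\dots,k_m,\ell_1,\dots,\ell_m$ with $N=\sum_{c=1}^m(k_c+\ell_c)>0$. Let $V$ be a $\mathbb K$-superspace with homogeneous basis $\{v^{(c)}_a:1\le c\le m,\ 1\le a\le k_c+\ell_c\}$, where $v^{(c)}_a$ is even if $a\le k_c$ and odd if $a>k_c$; $v^{(c)}_a$ has colour $c$. Totally order this basis by $v^{(c)}_a<v^{(c')}_b$ iff $c<c'$, or $c=c'$ and $a<b$, and write it as $u_1<\cdots<u_N$; let $\bar j\in\{0,1\}$ be the parity of $u_j$ and $\mathrm{col}(j)$ its colour. For $\mathbf i=(i_1,\dots,i_n)\in\{1,\dots,N\}^n$ write also $\mathbf i$ for the basis vector $u_{i_1}\otimes\cdots\otimes u_{i_n}$ of $V^{\otimes n}$, put $c_t(\mathbf i)=\mathrm{col}(i_t)$, and let $\mathbf i s_a$ be $\mathbf i$ with entries $a,a+1$ interchanged.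 Linear operators on $V^{\otimes n}$ ($1\le a\le n-1$): $s_a(\mathbf i)=(-1)^{\bar i_a}\mathbf i$ if $i_a=i_{a+1}$, $s_a(\mathbf i)=(-1)^{\bar i_a\bar i_{a+1}}\mathbf i s_a$ otherwise; $T_a(\mathbf i)=(q-q^{-1})\mathbf i+(-1)^{\bar i_a\bar i_{a+1}}\mathbf i s_a$ if $i_a<i_{a+1}$; $T_a(\mathbf i)=\frac{(q-q^{-1})+(-1)^{\bar i_a}(q+q^{-1})}{2}\mathbf i$ if $i_a=i_{a+1}$; $T_a(\mathbf i)=(-1)^{\bar i_a\bar i_{a+1}}\mathbf i s_a$ if $i_a>i_{a+1}$; $S_a(\mathbf i)=T_a(\mathbf i)$ if $c_a(\mathbf i)=c_{a+1}(\mathbf i)$, and $S_a(\mathbf i)=s_a(\mathbf i)$ otherwise. Products of operators denote composition. *)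

From HB Require Import structures.
From mathcomp Require Import all_boot all_order all_algebra.
From mathcomp Require Import complex.
From mathcomp Require Import Rstruct.
From mathcomp Require Import mpoly.
Set Implicit Arguments. Unset Strict Implicit. Unset Printing Implicit Defensive.
Import GRing.Theory.
Local Open Scope ring_scope.

Definition Cplx : numClosedFieldType := Rdefinitions.R[i].

(* K = C(q, Q_1, ..., Q_m): fraction field of C[X_0, ..., X_m],
   q = X_0, Q_c = X_c. *)
Definition Kfield (m : nat) : fieldType := {fraction {mpoly Cplx[m.+1]}}.
Definition qpar (m : nat) : Kfield m := tofrac ('X_ord0).

Section Ops.
Variables (m : nat) (k l : 'I_m -> nat) (n : nat).

(* The ordered basis u_1 < ... < u_N of V, listed as (colour, parity) pairs:
   colour c (0-based), parity true (odd) iff a > k_c (1-based a). *)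
Definition basis_seq : seq (nat * bool) :=
  flatten [seq [seq (val c, k c <= a)%N | a <- iota 0 (k c + l c)] | c <- enum 'I_m].
Definition Ndim : nat := (\sum_(c < m) (k c + l c))%N.
Definition col (j : nat) : nat := (nth (0%N, false) basis_seq j).1.
Definition par (j : nat) : bool := (nth (0%N, false) basis_seq j).2.

Local Notation K := (Kfield m).
Local Notation q := (qpar m).

(* basis tensors u_{i_1} (x) ... (x) u_{i_n}, indices 0-based in 'I_Ndim *)
Definition tens := {ffun 'I_n -> 'I_Ndim}.
Definition vec := tens -> K.
Definition op := vec -> vec.

Definition ent (t : tens) (p : nat) : nat := nth 0%N [seq val (t x) | x <- enum 'I_n] p.
(* exchange of (1-based) positions a and a+1, i.e. 0-based a-1 and a *)
Definition swp (a : nat) (p : 'I_n) : 'I_n :=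
  if val p == a.-1 then insubd p a else if val p == a then insubd p a.-1 else p.
Definition tswap (a : nat) (t : tens) : tens := [ffun p => t (swp a p)].

Definition bvec (t : tens) : vec := fun y => (y == t)%:R.
Definition sgn (b : bool) : K := (-1) ^+ b.
Definition ext (f : tens -> vec) : op := fun v y => \sum_x v x * f x y.

Definition s_b (a : nat) (t : tens) : vec :=
  let x := ent t a.-1 in let y := ent t a in
  if x == y then fun z => sgn (par x) * bvec t z
  else fun z => sgn (par x && par y) * bvec (tswap a t) z.

Definition T_b (a : nat) (t : tens) : vec :=
  let x := ent t a.-1 in let y := ent t a in
  if (x < y)%N then fun z => (q - q^-1) * bvec t z + sgn (par x && par y) * bvec (tswap a t) z
  else if x == y then fun z => ((q - q^-1) + sgn (par x) * (q + q^-1)) / 2%:R * bvec t z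
  else fun z => sgn (par x && par y) * bvec (tswap a t) z.

Definition S_b (a : nat) (t : tens) : vec :=
  if col (ent t a.-1) == col (ent t a) then T_b a t else s_b a t.

Definition sop (a : nat) : op := ext (s_b a).
Definition Top (a : nat) : op := ext (T_b a).
Definition Sop (a : nat) : op := ext (S_b a).
End Ops.

From Pilot Require Import Defs.
From HB Require Import structures.
From mathcomp Require Import all_boot all_order all_algebra.
From mathcomp Require Import ring zify.
From mathcomp Require Import mpoly.
From Stdlib Require Import FunctionalExtensionality.
Set Implicit Arguments. Unset Strict Implicit. Unset Printing Implicit Defensive.
Import GRing.Theory.
Local Open Scope ring_scope.

(* Each operator is the linear extension of a map on basis tensors that only
   looks at, and permutes, the entries at two adjacent positions; so on a basis
   tensor both sides of each identity only involve the entries at positions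
   j-1, j, j+1.  Their action is determined by the pattern of these three
   entries: their relative order, which of them share a colour, and their
   parities.  There are finitely many patterns, and for each one both sides are
   computed on words in three letters with coefficients Laurent polynomials in q
   over Z; all the patterns are checked at once by evaluation.  The inverse of
   S_{j-1} is handled the same way. *)

(* [(e, [:: c_0; c_1; ...])] stands for [q^-e * (c_0 + c_1 q + c_2 q^2 + ...)]. *)
Definition laurent := (nat * seq int)%type.

Fixpoint padd (a b : seq int) : seq int :=
  match a, b with
  | [::], _ => b
  | _, [::] => a
  | x :: a', y :: b' => x + y :: padd a' b'
  end.

Definition pscale (c : int) (a : seq int) : seq int := map ( *%R c) a.

Fixpoint pmul (a b : seq int) : seq int :=
  if a is x :: a' then padd (pscale x b) (0 :: pmul a' b) else [::].

Definition pshift (e : nat) (a : seq int) : seq int := nseq e 0 ++ a.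

Definition laurent_add (x y : laurent) : laurent :=
  ((x.1 + y.1)%N, padd (pshift y.1 x.2) (pshift x.1 y.2)).
Definition laurent_mul (x y : laurent) : laurent := ((x.1 + y.1)%N, pmul x.2 y.2).
Definition laurent_opp (x : laurent) : laurent := (x.1, map -%R x.2).
Definition laurent_eqb (x y : laurent) : bool :=
  all (eq_op^~ 0) (laurent_add x (laurent_opp y)).2.

Definition laurent0 : laurent := (0%N, [::]).
Definition laurent1 : laurent := (0%N, [:: 1]).
Definition laurent_sign (b : bool) : laurent := (0%N, [:: if b then -1 else 1]).
Definition laurent_qdiff : laurent := (1%N, [:: -1; 0; 1]).
Definition laurent_diag (b : bool) : laurent := if b then (1%N, [:: -1]) else (0%N, [:: 0; 1]).

Section LaurentEval.
Variables (F : fieldType) (q : F).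
Hypothesis q_neq0 : q != 0.

Fixpoint peval (a : seq int) : F := if a is c :: a' then c%:~R + q * peval a' else 0.

Lemma pevalD a b : peval (padd a b) = peval a + peval b.
Proof. by elim: a b => [|x a IH] [|y b] /=; rewrite ?add0r ?addr0 // IH intrD; ring. Qed.

Lemma pevalZ c a : peval (pscale c a) = c%:~R * peval a.
Proof. by elim: a => [|x a IH] /=; rewrite ?mulr0 // IH intrM; ring. Qed.

Lemma pevalM a b : peval (pmul a b) = peval a * peval b.
Proof. by elim: a => [|x a IH] /=; rewrite ?mul0r // pevalD pevalZ /= IH; ring. Qed.

Lemma pevalN a : peval (map -%R a) = - peval a.
Proof. by elim: a => [|x a IH] /=; rewrite ?oppr0 // IH intrN; ring. Qed.

Lemma peval_shift e a : peval (pshift e a) = q ^+ e * peval a.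
Proof. by elim: e => [|e IH] /=; rewrite ?mul1r // IH exprS; ring. Qed.

Lemma peval_eq0 a : all (eq_op^~ 0) a -> peval a = 0.
Proof. by elim: a => [|x a IH] //= /andP[/eqP-> /IH->]; rewrite mulr0 addr0. Qed.

Definition leval (x : laurent) : F := q^-1 ^+ x.1 * peval x.2.

Lemma levalD x y : leval (laurent_add x y) = leval x + leval y.
Proof.
case: x y => [e1 a] [e2 b]; rewrite /leval /= pevalD !peval_shift exprD.
have qK e : q^-1 ^+ e * q ^+ e = 1 by rewrite -exprMn mulVf // expr1n.
transitivity (q^-1 ^+ e1 * (q^-1 ^+ e2 * q ^+ e2) * peval a +
              q^-1 ^+ e2 * (q^-1 ^+ e1 * q ^+ e1) * peval b); first by ring.
by rewrite !qK; ring.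
Qed.

Lemma levalM x y : leval (laurent_mul x y) = leval x * leval y.
Proof. by case: x y => [e1 a] [e2 b]; rewrite /leval /= pevalM exprD; ring. Qed.

Lemma levalN x : leval (laurent_opp x) = - leval x.
Proof. by case: x => e a; rewrite /leval /= pevalN; ring. Qed.

Lemma leval_eq x y : laurent_eqb x y -> leval x = leval y.
Proof.
move=> /peval_eq0 xy0; apply/eqP; rewrite -subr_eq0 -levalN -levalD.
by rewrite /leval xy0 mulr0.
Qed.

Lemma leval0 : leval laurent0 = 0.
Proof. by rewrite /leval mulr0. Qed.

Lemma leval1 : leval laurent1 = 1.
Proof. by rewrite /leval /= mulr0 addr0 mul1r. Qed.

Lemma leval_sign b : leval (laurent_sign b) = (-1) ^+ b.
Proof. by case: b; rewrite /leval /= mulr0 addr0 mul1r. Qed.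

Lemma leval_qdiff : leval laurent_qdiff = q - q^-1.
Proof. by rewrite /leval /= !mulr0 !addr0 !mulrDr !mulrA mulVf //; ring. Qed.

Lemma leval_diag b : 2%:R != 0 :> F ->
  leval (laurent_diag b) = ((q - q^-1) + (-1) ^+ b * (q + q^-1)) / 2%:R.
Proof.
move=> two_neq0; apply: (mulIf two_neq0); rewrite divfK //.
by case: b; rewrite /leval /= ?mulr0 ?addr0 ?expr1 ?mul1r ?expr0; ring.
Qed.

End LaurentEval.

(* What the operators can see of three entries 0, 1, 2 of a tensor; a letter
   [a >= 2] is read as 2. *)
Record pattern := Pattern {
  cmp01 : comparison; cmp02 : comparison; cmp12 : comparison;
  col01 : bool; col02 : bool; col12 : bool;
  par0 : bool; par1 : bool; par2 : bool }.

Definition pcmp (D : pattern) (a b : nat) : comparison :=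
  match a, b with
  | 0, 0 => Eq | 0, 1 => cmp01 D | 0, _ => cmp02 D
  | 1, 0 => CompOpp (cmp01 D) | 1, 1 => Eq | 1, _ => cmp12 D
  | _, 0 => CompOpp (cmp02 D) | _, 1 => CompOpp (cmp12 D) | _, _ => Eq
  end%N.

Definition plt D a b : bool := if pcmp D a b is Lt then true else false.
Definition peq D a b : bool := if pcmp D a b is Eq then true else false.

Definition pcol (D : pattern) (a b : nat) : bool :=
  match a, b with
  | 0, 0 | 1, 1 => true
  | 0, 1 | 1, 0 => col01 D
  | 0, _ | _, 0 => col02 D
  | 1, _ | _, 1 => col12 D
  | _, _ => true
  end%N.

Definition ppar (D : pattern) (a : nat) : bool :=
  match a with 0 => par0 D | 1 => par1 D | _ => par2 D end%N.

Definition letters := [:: 0; 1; 2]%N.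

(* Relations satisfied by the pattern of three entries of an actual tensor; the
   last one holds because colours are nondecreasing along the basis. *)
Definition consistent3 D a b c :=
  [&& plt D a b && plt D b c ==> plt D a c,
      plt D a b && peq D b c ==> plt D a c,
      peq D a b && plt D b c ==> plt D a c,
      peq D a b && peq D b c ==> peq D a c,
      peq D a b ==> pcol D a b,
      peq D a b ==> (ppar D a == ppar D b),
      pcol D a b && pcol D b c ==> pcol D a c &
      [&& plt D a b, plt D b c & pcol D a c] ==> pcol D a b].

Definition consistent D :=
  all (fun a => all (fun b => all (consistent3 D a b) letters) letters) letters.

Definition word := (nat * nat * nat)%type.
Definition w012 : word := (0, 1, 2)%N.
Definition words : seq word :=
  [seq (ab, c) | ab <- [seq (a, b) | a <- letters, b <- letters], c <- letters].

(* Site [s] is the pair of letters [s], [s + 1], for [s = 0, 1]. *)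
Definition wfst (s : nat) (w : word) : nat := if s is 0 then w.1.1 else w.1.2.
Definition wsnd (s : nat) (w : word) : nat := if s is 0 then w.1.2 else w.2.
Definition wswap (s : nat) (w : word) : word :=
  if s is 0 then (w.1.2, w.1.1, w.2) else (w.1.1, w.2, w.1.2).

Definition svec := seq (laurent * word).
Definition sgate := word -> svec.

Definition symT D s : sgate := fun w =>
  let a := wfst s w in let b := wsnd s w in
  let swapped := (laurent_sign (ppar D a && ppar D b), wswap s w) in
  if plt D a b then [:: (laurent_qdiff, w); swapped]
  else if peq D a b then [:: (laurent_diag (ppar D a), w)]
  else [:: swapped].

Definition syms D s : sgate := fun w =>
  let a := wfst s w in let b := wsnd s w in
  if peq D a b then [:: (laurent_sign (ppar D a), w)]
  else [:: (laurent_sign (ppar D a && ppar D b), wswap s w)].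

Definition symS D s : sgate := fun w =>
  if pcol D (wfst s w) (wsnd s w) then symT D s w else syms D s w.

Definition symSinv D s : sgate := fun w =>
  if pcol D (wfst s w) (wsnd s w) then (laurent_opp laurent_qdiff, w) :: symT D s w
  else syms D s w.

Definition sapply (g : sgate) (v : svec) : svec :=
  flatten [seq [seq (laurent_mul c.1 d.1, d.2) | d <- g c.2] | c <- v].

Definition srun (gs : seq sgate) : svec := foldr sapply [:: (laurent1, w012)] gs.

(* Letters with equal entries give the same tensor, so they are identified
   before comparing coefficients. *)
Definition canon D (a : nat) : nat := if peq D 0 a then 0 else if peq D 1 a then 1 else 2.
Definition canonw D (w : word) : word := (canon D w.1.1, canon D w.1.2, canon D w.2).

Definition scoef D (v : svec) (w : word) : laurent :=
  foldr (fun c acc => if canonw D c.2 == w then laurent_add c.1 acc else acc) laurent0 v.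

Definition svec_eqb D (v1 v2 : svec) : bool :=
  all (fun w => laurent_eqb (scoef D v1 w) (scoef D v2 w)) words.

Definition identities_hold D : bool :=
  let T0 := symT D 0 in let T1 := symT D 1 in
  let S0 := symS D 0 in let S1 := symS D 1 in let Si0 := symSinv D 0 in
  [&& svec_eqb D (srun [:: S1; S0; T1]) (srun [:: T0; S1; S0]),
      svec_eqb D (srun [:: S1; S0; S1; Si0; T0]) (srun [:: T1; S1; S0; S1; Si0]),
      svec_eqb D (srun [:: S1; S0; S1; S0; T0]) (srun [:: T1; S1; S0; S1; S0]),
      svec_eqb D (srun [:: S0; Si0]) (srun [::]) &
      svec_eqb D (srun [:: Si0; S0]) (srun [::])].

Definition all_comparisons (P : comparison -> bool) : bool := [&& P Lt, P Eq & P Gt].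
Definition all_bools (P : bool -> bool) : bool := P true && P false.

Definition all_patterns (P : pattern -> bool) : bool :=
  all_comparisons (fun a => all_comparisons (fun b => all_comparisons (fun c =>
  all_bools (fun d => all_bools (fun e => all_bools (fun f =>
  all_bools (fun g => all_bools (fun h => all_bools (fun i =>
    P (Pattern a b c d e f g h i)))))))))).

Lemma all_patternsP P : all_patterns P -> forall D, P D.
Proof.
have allC Q : all_comparisons Q -> forall c, Q c by case/and3P => ? ? ? [].
have allB Q : all_bools Q -> forall b, Q b by case/andP => ? ? [].
move=> allP [a b c d e f g h i].
by move: allP => /allC/(_ a)/allC/(_ b)/allC/(_ c)/allB/(_ d)/allB/(_ e)/allB/(_ f)
  /allB/(_ g)/allB/(_ h)/allB/(_ i).
Qed.

Lemma consistent_identities_hold D : consistent D -> identities_hold D.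
Proof.
have all_ok : all_patterns (fun D => consistent D ==> identities_hold D) by vm_compute.
exact/implyP/(all_patternsP all_ok).
Qed.

Definition cmpn (x y : nat) : comparison :=
  if (x < y)%N then Lt else if x == y then Eq else Gt.

Lemma cmpn_opp x y : cmpn y x = CompOpp (cmpn x y).
Proof. by rewrite /cmpn; case: ltngtP. Qed.

Definition pick3 {T : Type} (x0 x1 x2 : T) (a : nat) : T :=
  match a with 0 => x0 | 1 => x1 | _ => x2 end%N.

Section PatternOf.
Variables (cl : nat -> nat) (pr : nat -> bool) (x0 x1 x2 : nat).
Local Notation x := (pick3 x0 x1 x2).

Definition pattern_of : pattern :=
  Pattern (cmpn x0 x1) (cmpn x0 x2) (cmpn x1 x2)
    (cl x0 == cl x1) (cl x0 == cl x2) (cl x1 == cl x2) (pr x0) (pr x1) (pr x2).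

Lemma pcmp_pattern_of a b : pcmp pattern_of a b = cmpn (x a) (x b).
Proof.
have cmpnn y : cmpn y y = Eq by rewrite /cmpn ltnn eqxx.
by case: a => [|[|a]]; case: b => [|[|b]]; rewrite /= ?cmpnn // [RHS]cmpn_opp.
Qed.

Lemma plt_pattern_of a b : plt pattern_of a b = (x a < x b)%N.
Proof. by rewrite /plt pcmp_pattern_of /cmpn; case: ltngtP. Qed.

Lemma peq_pattern_of a b : peq pattern_of a b = (x a == x b).
Proof. by rewrite /peq pcmp_pattern_of /cmpn; case: ltngtP. Qed.

Lemma pcol_pattern_of a b : pcol pattern_of a b = (cl (x a) == cl (x b)).
Proof. by case: a => [|[|a]]; case: b => [|[|b]]; rewrite /= ?eqxx // eq_sym. Qed.

Lemma ppar_pattern_of a : ppar pattern_of a = pr (x a).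
Proof. by case: a => [|[|a]]. Qed.

Lemma pattern_of_consistent N :
  (forall i j, (i <= j)%N -> (j < N)%N -> (cl i <= cl j)%N) ->
  (x0 < N)%N -> (x1 < N)%N -> (x2 < N)%N -> consistent pattern_of.
Proof.
move=> mono lt0 lt1 lt2.
have ltN a : (x a < N)%N by case: a => [|[|a]].
apply/allP => a _; apply/allP => b _; apply/allP => c _.
rewrite /consistent3 !plt_pattern_of !peq_pattern_of !pcol_pattern_of !ppar_pattern_of.
move: (x a) (x b) (x c) (ltN a) (ltN b) (ltN c) => y z u ltyN ltzN ltuN.
have mono_yz := mono y z; have mono_zu := mono z u.
by repeat (apply/andP; split); try lia; apply/implyP => /eqP->.
Qed.

End PatternOf.

Lemma tofrac_neq0 m (p : {mpoly Cplx[m.+1]}) :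
  p.@[fun=> 1] != 0 -> (tofrac p : Kfield m) != 0.
Proof. by apply: contra; rewrite tofrac_eq0 => /eqP->; rewrite meval0. Qed.

Lemma qpar_neq0 m : qpar m != 0.
Proof. by apply: tofrac_neq0; rewrite mevalXU oner_eq0. Qed.

Lemma two_neq0 m : 2%:R != 0 :> Kfield m.
Proof.
rewrite -(rmorph_nat (@tofrac _)); apply: tofrac_neq0.
by rewrite -(rmorph_nat (@mpolyC _ _)) mevalC Num.Theory.pnatr_eq0.
Qed.

Lemma path_flatten_nseq m (f : 'I_m -> nat) (s : seq 'I_m) (x0 : nat) :
  path leq x0 (map val s) -> path leq x0 (flatten [seq nseq (f c) (val c) | c <- s]).
Proof.
elim: s x0 => [|c s IH] x0 //= /andP[x0c cs]; rewrite cat_path.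
have path_nseq r : path leq x0 (nseq r (val c)).
  by case: r => //= r; rewrite x0c; elim: r => //= r ->; rewrite leqnn.
rewrite path_nseq; apply: IH; case: (f c) => [|r] /=; last by elim: r.
by case: s cs => //= c' s /andP[cc' ->]; rewrite (leq_trans x0c cc').
Qed.

Section BasisOrder.
Variables (m : nat) (k l : 'I_m -> nat).

Lemma size_basis_seq : size (basis_seq k l) = Ndim k l.
Proof.
rewrite /basis_seq size_flatten /shape -map_comp sumnE big_map /Ndim -[RHS]big_enum.
by apply: eq_bigr => c _; rewrite /= size_map size_iota.
Qed.

Lemma sorted_basis_colours : sorted leq (map fst (basis_seq k l)).
Proof.
have -> : map fst (basis_seq k l) = flatten [seq nseq (k c + l c) (val c) | c <- enum 'I_m].
  rewrite /basis_seq map_flatten -map_comp; congr flatten; apply: eq_map => c /=.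
  rewrite -map_comp -[in RHS](size_iota 0 (k c + l c)).
  by elim: (iota _ _) => //= a s ->.
apply: (@path_sorted _ _ 0); apply: path_flatten_nseq.
by rewrite val_enum_ord path_min_sorted ?iota_sorted //; apply/allP.
Qed.

Lemma col_monotone i j :
  (i <= j)%N -> (j < Ndim k l)%N -> (Defs.col k l i <= Defs.col k l j)%N.
Proof.
move=> ij jN; have iN := leq_ltn_trans ij jN.
rewrite /Defs.col -!(nth_map (0, false) 0 fst) ?size_basis_seq //.
by apply: (sorted_leq_nth leq_trans leqnn 0 sorted_basis_colours);
  rewrite // inE size_map size_basis_seq.
Qed.

End BasisOrder.

Lemma sum_seq_delta (R : pzSemiRingType) (T : eqType) (s : seq T) x (F : T -> R) :
  uniq s -> x \in s -> \sum_(y <- s) (x == y)%:R * F y = F x.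
Proof.
move=> s_uniq xs; rewrite (bigD1_seq x) //= eqxx mul1r big1 ?addr0 // => y.
by rewrite eq_sym => /negPf->; rewrite mul0r.
Qed.

Section Operators.
Variables (m : nat) (k l : 'I_m -> nat) (n : nat).
Local Notation tens := (tens k l n).
Local Notation vec := (Defs.vec k l n).
Local Notation op := (op k l n).
Local Notation q := (qpar m).

Lemma ext_bvec (f : tens -> vec) t : ext f (bvec t) = f t.
Proof.
apply: functional_extensionality => u.
rewrite /ext (bigD1 t) //= /bvec eqxx mul1r big1 ?addr0 // => x /negPf->.
by rewrite mul0r.
Qed.

Lemma ext_comp (f g : tens -> vec) v : ext f (ext g v) = ext (fun t => ext f (g t)) v.
Proof.
apply: functional_extensionality => u; rewrite /ext.
under eq_bigr do rewrite mulr_suml.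
rewrite exchange_big; apply: eq_bigr => x _; rewrite mulr_sumr.
by apply: eq_bigr => y _; rewrite mulrA.
Qed.

Definition is_ext (A : op) : Prop := forall v, A v = ext (fun t => A (bvec t)) v.

Lemma ext_is_ext f : is_ext (ext f).
Proof.
by move=> v; congr (ext _ v); apply: functional_extensionality => t; rewrite ext_bvec.
Qed.

Lemma is_ext_comp A B : is_ext A -> is_ext B -> is_ext (A \o B).
Proof.
move=> extA extB v /=; rewrite {1}extB {1}extA ext_comp; congr (ext _ v).
by apply: functional_extensionality => t; rewrite -extA.
Qed.

Lemma id_is_ext : is_ext id.
Proof.
move=> v; apply: functional_extensionality => u.
rewrite /ext (bigD1 u) //= /bvec eqxx mulr1 big1 ?addr0 // => x.
by rewrite eq_sym => /negPf->; rewrite mulr0.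
Qed.

Lemma is_ext_eq A B :
  is_ext A -> is_ext B -> (forall t, A (bvec t) = B (bvec t)) -> A = B.
Proof.
move=> extA extB AB; apply: functional_extensionality => v; rewrite extA extB.
by congr (ext _ v); apply: functional_extensionality.
Qed.

(* The Hecke relation [(T - q) (T + q^-1) = 0] gives [T^-1 = T - (q - q^-1)]. *)
Definition Sinv_b (a : nat) (t : tens) : vec :=
  if Defs.col k l (ent t a.-1) == Defs.col k l (ent t a)
  then fun z => T_b a t z - (q - q^-1) * bvec t z
  else s_b a t.

Definition Sinvop (a : nat) : op := ext (Sinv_b a).

Lemma ent_ord (t : tens) (p : 'I_n) : ent t p = val (t p).
Proof. by rewrite /ent (nth_map p) ?size_enum_ord ?ltn_ord // nth_ord_enum. Qed.

Section Window.
Variables (j : nat) (t : tens).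
Hypotheses (j_gt1 : (1 < j)%N) (j_ltn : (j < n)%N).

Let p2 : 'I_n := Ordinal j_ltn.
Let p1 : 'I_n := Ordinal (leq_ltn_trans (leq_pred j) j_ltn).
Let p0 : 'I_n := Ordinal (leq_ltn_trans (leq_pred j.-1) (ltn_ord p1)).

Lemma window_positions_neq : [/\ p0 != p1, p0 != p2 & p1 != p2].
Proof. by rewrite -!val_eqE /=; split; apply/eqP; lia. Qed.

Definition letter (a : nat) : 'I_(Ndim k l) := pick3 (t p0) (t p1) (t p2) a.

(* [fill w] is [t] with its entries at (0-based) positions j-2, j-1, j replaced
   by the entries of [t] there named by the letters of [w]. *)
Definition fill (w : word) : tens :=
  [ffun p => if p == p0 then letter w.1.1 else if p == p1 then letter w.1.2
             else if p == p2 then letter w.2 else t p].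

Lemma fillE w :
  [/\ fill w p0 = letter w.1.1, fill w p1 = letter w.1.2 & fill w p2 = letter w.2].
Proof.
have [n01 n02 n12] := window_positions_neq.
by rewrite !ffunE eqxx eq_sym (negPf n01) eqxx eq_sym (negPf n02) eq_sym (negPf n12) eqxx.
Qed.

Lemma fill_w012 : fill w012 = t.
Proof.
apply/ffunP => p; rewrite ffunE.
by case: eqVneq => [->|_] //; case: eqVneq => [->|_] //; case: eqVneq => [->|_].
Qed.

Lemma ent_fill w :
  [/\ ent (fill w) j.-2 = val (letter w.1.1), ent (fill w) j.-1 = val (letter w.1.2)
    & ent (fill w) j = val (letter w.2)].
Proof.
have [f0 f1 f2] := fillE w.
by rewrite -[j.-2]/(val p0) -[j.-1]/(val p1) -[j]/(val p2) !ent_ord f0 f1 f2.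
Qed.

Lemma swp_window p :
  swp j.-1 p = (if p == p0 then p1 else if p == p1 then p0 else p) /\
  swp j p = (if p == p1 then p2 else if p == p2 then p1 else p).
Proof. by rewrite /swp -[j.-2]/(val p0) -[j.-1]/(val p1) -[j]/(val p2) !valKd !val_eqE. Qed.

Lemma tswap_fill w :
  tswap j.-1 (fill w) = fill (wswap 0 w) /\ tswap j (fill w) = fill (wswap 1 w).
Proof.
have [n01 n02 n12] := window_positions_neq.
have [f0 f1 f2] := fillE w.
split; apply/ffunP => p; have [sw0 sw1] := swp_window p; rewrite ffunE ?sw0 ?sw1 [RHS]ffunE.
- case: (eqVneq p p0) => [_|np0]; first by rewrite f1.
  case: (eqVneq p p1) => [_|np1]; first by rewrite f0.
  by rewrite ffunE (negPf np0) (negPf np1).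
- case: (eqVneq p p0) => [->|np0]; first by rewrite (negPf n01) (negPf n02) f0.
  case: (eqVneq p p1) => [_|np1]; first by rewrite f2.
  case: (eqVneq p p2) => [_|np2]; first by rewrite f1.
  by rewrite ffunE (negPf np0) (negPf np1) (negPf np2).
Qed.

Definition window_pattern : pattern :=
  pattern_of (Defs.col k l) (par k l) (t p0) (t p1) (t p2).
Local Notation D := window_pattern.

Lemma window_pattern_consistent : consistent D.
Proof.
exact: (pattern_of_consistent _ (@col_monotone m k l) (ltn_ord _) (ltn_ord _) (ltn_ord _)).
Qed.

Lemma plt_window a b : plt D a b = (val (letter a) < val (letter b))%N.
Proof. by rewrite plt_pattern_of; case: a => [|[|a]]; case: b => [|[|b]]. Qed.

Lemma peq_window a b : peq D a b = (val (letter a) == val (letter b)).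
Proof. by rewrite peq_pattern_of; case: a => [|[|a]]; case: b => [|[|b]]. Qed.

Lemma pcol_window a b : pcol D a b = (Defs.col k l (letter a) == Defs.col k l (letter b)).
Proof. by rewrite pcol_pattern_of; case: a => [|[|a]]; case: b => [|[|b]]. Qed.

Lemma ppar_window a : ppar D a = par k l (letter a).
Proof. by rewrite ppar_pattern_of; case: a => [|[|a]]. Qed.

Lemma letter_canon a : letter (canon D a) = letter a.
Proof.
rewrite /canon !peq_window.
case: eqVneq => [/val_inj //|ne0]; case: eqVneq => [/val_inj //|ne1].
by case: a ne0 ne1 => [|[|a]]; rewrite ?eqxx.
Qed.

Lemma fill_canon w : fill (canonw D w) = fill w.
Proof. by apply/ffunP => p; rewrite !ffunE /= !letter_canon. Qed.

Definition seval (v : svec) : vec :=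
  fun u => \sum_(c <- v) leval q c.1 * bvec (fill c.2) u.

Lemma bvec_seval : bvec t = seval [:: (laurent1, w012)].
Proof.
apply: functional_extensionality => u.
by rewrite /seval big_seq1 leval1 mul1r fill_w012.
Qed.

Definition realizes (f : tens -> vec) (g : sgate) : Prop :=
  forall w, f (fill w) = seval (g w).

Lemma ext_seval f g : realizes f g -> forall v, ext f (seval v) = seval (sapply g v).
Proof.
move=> fg v; apply: functional_extensionality => u.
transitivity (\sum_(c <- v) leval q c.1 * ext f (bvec (fill c.2)) u).
  rewrite /ext /seval; under eq_bigr do rewrite mulr_suml.
  rewrite exchange_big; apply: eq_bigr => c _; rewrite mulr_sumr.
  by apply: eq_bigr => x _; rewrite mulrA.
rewrite /seval /sapply big_flatten big_map; apply: eq_bigr => c _.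
rewrite ext_bvec fg /seval big_map mulr_sumr; apply: eq_bigr => d _.
by rewrite levalM mulrA.
Qed.

Lemma canonw_in_words w : canonw D w \in words.
Proof.
have canon_in a : canon D a \in letters by rewrite /canon; case: ifP => _; [|case: ifP].
rewrite /canonw; move: (canon_in w.1.1) (canon_in w.1.2) (canon_in w.2).
by rewrite !inE => /or3P[]/eqP-> /or3P[]/eqP-> /or3P[]/eqP->.
Qed.

Lemma seval_scoef v u :
  seval v u = \sum_(w <- words) leval q (scoef D v w) * bvec (fill w) u.
Proof.
elim: v => [|[c w] v IH].
  by rewrite /seval big_nil big1 // => w _; rewrite leval0 mul0r.
rewrite /seval big_cons -/(seval v u) IH.
rewrite -(fill_canon w) -(sum_seq_delta (fun w' => leval q c * bvec (fill w') u) _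
  (canonw_in_words w)) // -big_split /=.
apply: eq_bigr => w' _; rewrite [scoef _ _ _]/= -/(scoef D v w').
by case: eqP => _; rewrite ?(levalD (qpar_neq0 m)) /=; ring.
Qed.

Lemma svec_eqbP v1 v2 : svec_eqb D v1 v2 -> seval v1 = seval v2.
Proof.
move=> /allP v12; apply: functional_extensionality => u; rewrite !seval_scoef.
by apply: eq_big_seq => w /v12 /(leval_eq (qpar_neq0 m)) ->.
Qed.

Local Ltac seval_evaluate :=
  apply: functional_extensionality => u;
  rewrite /seval ?big_cons big_nil /sgn ?(leval_qdiff (qpar_neq0 m)) ?leval_sign
    ?(@leval_diag _ q _ (two_neq0 m)) /= ?addr0.

Lemma realizes_T0 : realizes (T_b j.-1) (symT D 0).
Proof.
move=> w; have [e0 e1 _] := ent_fill w; have [sw _] := tswap_fill w.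
rewrite /symT /= /T_b e0 e1 sw !plt_window !peq_window !ppar_window.
by case: ifP => _; [|case: ifP => _]; seval_evaluate.
Qed.

Lemma realizes_T1 : realizes (T_b j) (symT D 1).
Proof.
move=> w; have [_ e1 e2] := ent_fill w; have [_ sw] := tswap_fill w.
rewrite /symT /= /T_b e1 e2 sw !plt_window !peq_window !ppar_window.
by case: ifP => _; [|case: ifP => _]; seval_evaluate.
Qed.

Lemma realizes_s0 : realizes (s_b j.-1) (syms D 0).
Proof.
move=> w; have [e0 e1 _] := ent_fill w; have [sw _] := tswap_fill w.
rewrite /syms /= /s_b e0 e1 sw !peq_window !ppar_window.
by case: ifP => _; seval_evaluate.
Qed.

Lemma realizes_s1 : realizes (s_b j) (syms D 1).
Proof.
move=> w; have [_ e1 e2] := ent_fill w; have [_ sw] := tswap_fill w.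
rewrite /syms /= /s_b e1 e2 sw !peq_window !ppar_window.
by case: ifP => _; seval_evaluate.
Qed.

Lemma realizes_S0 : realizes (S_b j.-1) (symS D 0).
Proof.
move=> w; have [e0 e1 _] := ent_fill w.
rewrite /symS /= /S_b e0 e1 !pcol_window.
by case: ifP => _; [apply: realizes_T0 | apply: realizes_s0].
Qed.

Lemma realizes_S1 : realizes (S_b j) (symS D 1).
Proof.
move=> w; have [_ e1 e2] := ent_fill w.
rewrite /symS /= /S_b e1 e2 !pcol_window.
by case: ifP => _; [apply: realizes_T1 | apply: realizes_s1].
Qed.

Lemma realizes_Sinv0 : realizes (Sinv_b j.-1) (symSinv D 0).
Proof.
move=> w; have [e0 e1 _] := ent_fill w.
rewrite /symSinv /= /Sinv_b e0 e1 !pcol_window.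
case: ifP => _; last exact: realizes_s0.
rewrite realizes_T0; apply: functional_extensionality => u.
by rewrite /seval big_cons levalN (leval_qdiff (qpar_neq0 m)) /=; ring.
Qed.

Let ext_sevalE := (ext_seval realizes_T0, ext_seval realizes_T1, ext_seval realizes_S0,
  ext_seval realizes_S1, ext_seval realizes_Sinv0).

Let window_identities : identities_hold D :=
  consistent_identities_hold window_pattern_consistent.

Lemma SST_eq_TSS_basis :
  Sop j (Sop j.-1 (Top j (bvec t))) = Top j.-1 (Sop j (Sop j.-1 (bvec t))).
Proof.
case/and5P: window_identities => braid _ _ _ _.
by rewrite bvec_seval /Sop /Top !ext_sevalE; apply: svec_eqbP.
Qed.

Lemma SSSSinvT_eq_TSSSSinv_basis :
  Sop j (Sop j.-1 (Sop j (Sinvop j.-1 (Top j.-1 (bvec t)))))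
  = Top j (Sop j (Sop j.-1 (Sop j (Sinvop j.-1 (bvec t))))).
Proof.
case/and5P: window_identities => _ braid _ _ _.
by rewrite bvec_seval /Sop /Top /Sinvop !ext_sevalE; apply: svec_eqbP.
Qed.

Lemma SSSST_eq_TSSSS_basis :
  Sop j (Sop j.-1 (Sop j (Sop j.-1 (Top j.-1 (bvec t)))))
  = Top j (Sop j (Sop j.-1 (Sop j (Sop j.-1 (bvec t))))).
Proof.
case/and5P: window_identities => _ _ braid _ _.
by rewrite bvec_seval /Sop /Top !ext_sevalE; apply: svec_eqbP.
Qed.

Lemma Sop_Sinv_basis : Sop j.-1 (Sinvop j.-1 (bvec t)) = bvec t.
Proof.
case/and5P: window_identities => _ _ _ inv _.
by rewrite bvec_seval /Sop /Sinvop !ext_sevalE; apply: svec_eqbP.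
Qed.

Lemma Sinv_Sop_basis : Sinvop j.-1 (Sop j.-1 (bvec t)) = bvec t.
Proof.
case/and5P: window_identities => _ _ _ _ inv.
by rewrite bvec_seval /Sop /Sinvop !ext_sevalE; apply: svec_eqbP.
Qed.

End Window.

Local Ltac is_ext_composite := repeat apply: is_ext_comp; apply: ext_is_ext.

Section Identities.
Variable j : nat.
Hypotheses (j_gt1 : (1 < j)%N) (j_ltn : (j < n)%N).
Local Notation S := (@Sop m k l n).
Local Notation T := (@Top m k l n).

Lemma SST_eq_TSS : S j \o S j.-1 \o T j = T j.-1 \o S j \o S j.-1.
Proof.
apply: is_ext_eq; [is_ext_composite | is_ext_composite |].
by move=> t; apply: SST_eq_TSS_basis.
Qed.

Lemma Sop_SinvK : cancel (Sinvop j.-1) (S j.-1).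
Proof.
suff SSinv : S j.-1 \o Sinvop j.-1 = id by move=> v; rewrite -[RHS]/(id v) -SSinv.
by apply: is_ext_eq; [is_ext_composite | exact: id_is_ext | move=> t; apply: Sop_Sinv_basis].
Qed.

Lemma Sinv_SopK : cancel (S j.-1) (Sinvop j.-1).
Proof.
suff SinvS : Sinvop j.-1 \o S j.-1 = id by move=> v; rewrite -[RHS]/(id v) -SinvS.
by apply: is_ext_eq; [is_ext_composite | exact: id_is_ext | move=> t; apply: Sinv_Sop_basis].
Qed.

Lemma SSSSinvT_eq_TSSSSinv :
  S j \o S j.-1 \o S j \o Sinvop j.-1 \o T j.-1
  = T j \o S j \o S j.-1 \o S j \o Sinvop j.-1.
Proof.
apply: is_ext_eq; [is_ext_composite | is_ext_composite |].
by move=> t; apply: SSSSinvT_eq_TSSSSinv_basis.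
Qed.

Lemma SSSST_eq_TSSSS :
  S j \o S j.-1 \o S j \o S j.-1 \o T j.-1 = T j \o S j \o S j.-1 \o S j \o S j.-1.
Proof.
apply: is_ext_eq; [is_ext_composite | is_ext_composite |].
by move=> t; apply: SSSST_eq_TSSSS_basis.
Qed.

End Identities.
End Operators.

Theorem mainTheorem3 (m : nat) (k l : 'I_m -> nat) (n : nat) :
  (3 <= n)%N -> (1 <= m)%N -> (0 < Ndim k l)%N ->
  forall j : nat, (2 <= j <= n.-1)%N ->
  let S := @Sop m k l n in let T := @Top m k l n in
  [/\ S j \o S j.-1 \o T j = T j.-1 \o S j \o S j.-1,
      (exists Sinv : op k l n, cancel (S j.-1) Sinv /\ cancel Sinv (S j.-1)),
      (forall Sinv : op k l n, cancel (S j.-1) Sinv -> cancel Sinv (S j.-1) ->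
         S j \o S j.-1 \o S j \o Sinv \o T j.-1
         = T j \o S j \o S j.-1 \o S j \o Sinv)
    & S j \o S j.-1 \o S j \o S j.-1 \o T j.-1
      = T j \o S j \o S j.-1 \o S j \o S j.-1].
Proof.
move=> n_ge3 _ _ j /andP[j_gt1 j_le] S T.
have j_ltn : (j < n)%N by lia.
have SK := Sop_SinvK j_gt1 j_ltn; have KS := Sinv_SopK j_gt1 j_ltn.
split.
- exact: SST_eq_TSS.
- by exists (Sinvop j.-1).
- move=> Sinv SSinv _.
  have -> : Sinv = Sinvop j.-1.
    by apply: functional_extensionality => v; apply: (canLR SSinv); rewrite /S SK.
  exact: SSSSinvT_eq_TSSSSinv.
- exact: SSSST_eq_TSSSS.
Qed.
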